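(* Let $K:E(K_{s,t})\to L_n$ be an edge-labeling of the complete bipartite graph $K_{s,t}$ with permutations from $L_n$. Then $(K_{s,t},K)$ has no consistent vertex-labeling if and only if $K_{s,t}$ contains a $4$-cycle $C$ such that $(C,K|_{E(C)})$ has no consistent vertex-labeling.
   Context: Labeled graphs: $G$ is a finite simple graph in which each edge is given a fixed orientation; $uv$ denotes the edge oriented from $u$ to $v$. An edge-labeling $K:E(G)\to S_n$ assigns to each edge a permutation of $[n]=\{0,\dots,n-1\}$. A vertex-labeling is a map $k:V(G)\to[n]$. An edge $uv$ with $K(uv)=\pi$ is a contradiction of $k$ if $\pi(k(u))\neq k(v)$. A vertex-labeling is consistent if it has no contradictions. $L_n=\{\pi_0,\dots,\pi_{n-1}\}\subseteq S_n$, where $\pi_i(x)\equiv i-x \pmod n$. Each $\pi_i$ is an involution, so orientation is irrelevant. *)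

From mathcomp Require Import all_boot.
Set Implicit Arguments. Unset Strict Implicit. Unset Printing Implicit Defensive.

(* pi_i(x) = i - x (mod n), as a natural number in [0, n) (for n > 0). *)
Definition piL (n : nat) (i x : 'I_n) : nat := (i + (n - x)) %% n.

(* A labeled graph with vertex type V, oriented edge list E (pairs (u,v) for
   the edge uv), and edge-labeling K assigning to each edge the index i of
   pi_i in L_n. *)
Definition consistent (V : finType) (n : nat) (E : seq (V * V))
  (K : V * V -> 'I_n) (k : V -> 'I_n) : bool :=
  all (fun e => piL (K e) (k e.1) == k e.2) E.

Definition Kst_vert (s t : nat) : finType := ('I_s + 'I_t)%type.

Definition Kst_edges (s t : nat) : seq (Kst_vert s t * Kst_vert s t) :=
  [seq ((inl i : Kst_vert s t), (inr j : Kst_vert s t)) | i <- enum 'I_s, j <- enum 'I_t].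

Definition C4_edges (s t : nat) (u1 u2 : 'I_s) (v1 v2 : 'I_t)
  : seq (Kst_vert s t * Kst_vert s t) :=
  [:: (inl u1, inr v1); (inl u1, inr v2); (inl u2, inr v1); (inl u2, inr v2)].

(* Writing [pi_i(x) = y] as [x + y = i (mod n)], a 4-cycle u1 v1 u2 v2 is
   consistently labelable iff it is balanced:
   K(u1 v1) + K(u2 v2) = K(u1 v2) + K(u2 v1) (mod n).  If all 4-cycles of
   K_{s,t} are balanced, fix u0, v0 and label v by K(u0 v) and u by
   K(u v0) - K(u0 v0); the balance of the cycle u v u0 v0 is exactly the
   consistency of the edge uv. *)

From mathcomp Require Import all_boot zify.

Set Implicit Arguments.
Unset Strict Implicit.
Unset Printing Implicit Defensive.

Lemma piL_eqE n (i x y : 'I_n) : (piL i x == y) = (x + y == i %[mod n]).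
Proof.
have xn := ltn_ord x; have yn := ltn_ord y.
rewrite /piL; apply/eqP/eqP => [<-|xyE].
  by rewrite modnDmr addnCA subnKC ?(ltnW xn) // -modnDmr modnn addn0.
have -> : nat_of_ord y = (x + y + (n - x)) %% n.
  by rewrite addnAC subnKC ?(ltnW xn) // modnDl modn_small.
by rewrite -[RHS]modnDml xyE modnDml.
Qed.

Lemma consistent_sub (V : finType) n (E1 E2 : seq (V * V)) K (k : V -> 'I_n) :
  {subset E1 <= E2} -> consistent E2 K k -> consistent E1 K k.
Proof. by move=> sE12 /allP kE2; apply/allP => e /sE12 /kE2. Qed.

Section CompleteBipartite.

Variables (n s t : nat) (K : Kst_vert s t * Kst_vert s t -> 'I_n).

Local Notation c u v := (K (inl u, inr v)).

Lemma C4_edges_sub (u1 u2 : 'I_s) (v1 v2 : 'I_t) :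
  {subset C4_edges u1 u2 v1 v2 <= Kst_edges s t}.
Proof.
move=> e; rewrite !inE => /or4P [] /eqP ->; apply/allpairsP;
  [exists (u1, v1) | exists (u1, v2) | exists (u2, v1) | exists (u2, v2)];
  by rewrite /= !mem_enum.
Qed.

Definition balanced (u1 u2 : 'I_s) (v1 v2 : 'I_t) : bool :=
  c u1 v1 + c u2 v2 == c u1 v2 + c u2 v1 %[mod n].

Lemma balanced_degenerate u1 u2 v1 v2 :
  (u1 == u2) || (v1 == v2) -> balanced u1 u2 v1 v2.
Proof. by case/orP => /eqP ->; rewrite /balanced // addnC. Qed.

Lemma consistent_C4_balanced u1 u2 v1 v2 (k : Kst_vert s t -> 'I_n) :
  consistent (C4_edges u1 u2 v1 v2) K k -> balanced u1 u2 v1 v2.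
Proof.
rewrite /consistent /= !piL_eqE /= => /and5P [/eqP e11 /eqP e12 /eqP e21 /eqP e22 _].
rewrite /balanced -modnDm -e11 -e22 modnDm -[in X in _ == X]modnDm -e12 -e21 modnDm.
by apply/eqP; congr (_ %% n); lia.
Qed.

Definition balanced_labeling (u0 : 'I_s) (v0 : 'I_t) (x : Kst_vert s t) : 'I_n :=
  match x with
  | inl u => Ordinal (ltn_pmod (c u v0 + (n - c u0 v0))
                               (leq_ltn_trans (leq0n _) (ltn_ord (c u0 v0))))
  | inr v => c u0 v
  end.

Lemma balanced_labeling_consistent u0 v0 :
  (forall u v, balanced u u0 v v0) ->
  consistent (Kst_edges s t) K (balanced_labeling u0 v0).
Proof.
move=> bal; apply/allP => e /allpairsP [[u v] [_ _ ->]] /=.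
rewrite piL_eqE /= modnDml -(eqn_modDr (c u0 v0)).
have -> : c u v0 + (n - c u0 v0) + c u0 v + c u0 v0 = c u v0 + c u0 v + n.
  by have := ltn_ord (c u0 v0); lia.
by rewrite modnDr eq_sym; apply: bal.
Qed.

Lemma consistent_Kst_of_balanced : 0 < n ->
  (forall u1 u2 v1 v2, balanced u1 u2 v1 v2) ->
  exists k, consistent (Kst_edges s t) K k.
Proof.
move=> n_gt0 bal.
case: (pickP (@predT 'I_s)) => [u0 _ | no_u]; last first.
  exists (fun _ => Ordinal n_gt0); apply/allP => e /allpairsP [[u v] [_ _ _]].
  by have := no_u u.
case: (pickP (@predT 'I_t)) => [v0 _ | no_v]; last first.
  exists (fun _ => Ordinal n_gt0); apply/allP => e /allpairsP [[u v] [_ _ _]].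
  by have := no_v v.
by exists (balanced_labeling u0 v0); apply: balanced_labeling_consistent.
Qed.

End CompleteBipartite.

Theorem mainTheorem19 (n s t : nat) (hn : 0 < n)
  (K : Kst_vert s t * Kst_vert s t -> 'I_n) :
  (~ exists k : Kst_vert s t -> 'I_n, consistent (Kst_edges s t) K k) <->
  (exists (u1 u2 : 'I_s) (v1 v2 : 'I_t),
     u1 != u2 /\ v1 != v2 /\
     ~ exists k : Kst_vert s t -> 'I_n, consistent (C4_edges u1 u2 v1 v2) K k).
Proof.
split; last first.
  move=> [u1 [u2 [v1 [v2 [_ [_ no_k]]]]]] [k kE]; apply: no_k; exists k.
  by apply: consistent_sub kE; apply: C4_edges_sub.
move=> no_k.
have [|all_bal] := boolP [exists u1, exists u2, exists v1, exists v2,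
                           [&& u1 != u2, v1 != v2 & ~~ balanced K u1 u2 v1 v2]].
  move=> /existsP [u1 /existsP [u2 /existsP [v1 /existsP [v2]]]].
  case/and3P => nu nv unbal; exists u1, u2, v1, v2; do 2!split => //.
  by move=> [k /consistent_C4_balanced bal]; rewrite bal in unbal.
case: no_k; apply: consistent_Kst_of_balanced => // u1 u2 v1 v2.
have [/balanced_degenerate // | /norP [nu nv]] := boolP ((u1 == u2) || (v1 == v2)).
apply: contraNT all_bal => unbal.
by apply/existsP; exists u1; apply/existsP; exists u2; apply/existsP; exists v1;
   apply/existsP; exists v2; rewrite nu nv unbal.
Qed.
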